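(* Let $\mathbf{X}=(X_1,\dots,X_d)$ be a random vector such that each $X_i$ is a.s. nonnegative with $0<E(X_i)<\infty$, and let $\|\mathbf{x}\|_F=E(\max(|x_0|,|x_1|X_1,\dots,|x_d|X_d))$. For any $\mathbf{x}\in\mathbb{R}^{d+1}$, $$\max(|x_0|,|x_1|E(X_1),\dots,|x_d|E(X_d))\le\|\mathbf{x}\|_F\le|x_0|+\sum_{i=1}^d|x_i|E(X_i).$$ The upper bound is strict whenever $x_0\ne0$ and $x_i\ne0$ for at least one $i\in\{1,\dots,d\}$. *)

From HB Require Import structures.
From mathcomp Require Import all_boot all_order all_algebra.
From mathcomp Require Import all_classical all_reals all_analysis.
Set Implicit Arguments. Unset Strict Implicit. Unset Printing Implicit Defensive.
Import Order.TTheory GRing.Theory Num.Theory.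
Local Open Scope ring_scope.

(* x : 'rV_(d.+1) encodes (x_0, x_1, ..., x_d): x_0 = x 0 ord0,
   x_i = x 0 (lift ord0 (i-1)); X i encodes X_{i+1}. *)
Definition normF (d : nat) (dT : measure_display) (T : measurableType dT)
  (R : realType) (P : probability T R) (X : 'I_d -> {RV P >-> R})
  (x : 'rV[R]_d.+1) : \bar R :=
  ('E_P[fun w : T => (\big[Num.max/`|x 0 ord0|]_(i < d) (`|x 0 (lift ord0 i)| * X i w))%R])%E.

From HB Require Import structures.
From mathcomp Require Import all_boot all_order all_algebra.
From mathcomp Require Import all_classical all_reals all_analysis.
From mathcomp Require Import measurable_realfun.
From mathcomp Require Import lra.
Import Order.TTheory GRing.Theory Num.Theory.
Local Open Scope ring_scope.

(* Pointwise, max(|x_0|, |x_1| X_1, ..., |x_d| X_d) dominates each of its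
   entries and is dominated by their sum; taking expectations gives both
   bounds.  If x_0 and x_j are nonzero, the sum exceeds the max pointwise by at
   least min(|x_0|, |x_j| X_j), whose expectation is positive because
   E(X_j) > 0; this makes the upper bound strict. *)

Section bigmax_sum.
Context {R : realDomainType} {I : finType} {a : R} {F : I -> R}.
Hypotheses (a_ge0 : 0 <= a) (F_ge0 : forall i, 0 <= F i).

Lemma ler_sum_term j : F j <= \sum_i F i.
Proof. by rewrite (bigD1 j) //= lerDl sumr_ge0. Qed.

Lemma bigmax_le_add_sum : \big[Num.max/a]_i F i <= a + \sum_i F i.
Proof.
apply: bigmax_le => [|i _]; first by rewrite lerDl sumr_ge0.
by rewrite (le_trans (ler_sum_term i)) ?lerDr.
Qed.

Lemma minr_add_bigmax_le_add_sum j :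
  Num.min a (F j) + \big[Num.max/a]_i F i <= a + \sum_i F i.
Proof.
have min_le_a : Num.min a (F j) <= a by rewrite ge_min lexx.
have min_le_sum : Num.min a (F j) <= \sum_i F i.
  by rewrite ge_min (ler_sum_term j) orbT.
suff : \big[Num.max/a]_i F i <= a + \sum_i F i - Num.min a (F j) by lra.
apply: bigmax_le => [|i _]; first by lra.
by have := ler_sum_term i; lra.
Qed.

End bigmax_sum.

Lemma measurable_bigmax d (T : measurableType d) (R : realType) (D : set T)
    (I : Type) (s : seq I) (a : R) (F : I -> T -> R) :
  (forall i, measurable_fun D (F i)) ->
  measurable_fun D (fun w => \big[Num.max/a]_(i <- s) F i w).
Proof.
move=> mF; elim: s => [|i s IHs].
  by under eq_fun do rewrite big_nil; exact: measurable_cst.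
by under eq_fun do rewrite big_cons; exact: measurable_maxr.
Qed.

Section nonnegative_expectation.
Context d (T : measurableType d) (R : realType) (P : probability T R).
Local Open Scope ereal_scope.
Implicit Types (f g : T -> R) (k : R).

Lemma ge0_expectationD f g :
    measurable_fun setT f -> measurable_fun setT g ->
    (forall w, 0 <= f w)%R -> (forall w, 0 <= g w)%R ->
  'E_P[f \+ g] = 'E_P[f] + 'E_P[g].
Proof.
move=> mf mg f0 g0; rewrite unlock; under eq_integral do rewrite EFinD.
apply: ge0_integralD => //; try exact/measurable_EFinP.
all: by move=> w _; rewrite lee_fin.
Qed.

Lemma ge0_expectation_sum (I : Type) (s : seq I) (F : I -> T -> R) :
    (forall i, measurable_fun setT (F i)) -> (forall i w, 0 <= F i w)%R ->
  'E_P[fun w => (\sum_(i <- s) F i w)%R] = \sum_(i <- s) 'E_P[F i].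
Proof.
move=> mF F0; rewrite unlock; under eq_integral do rewrite -sumEFin.
apply: ge0_integral_sum => // i; first exact/measurable_EFinP.
by move=> w _; rewrite lee_fin.
Qed.

Lemma ge0_expectationZl k f : (0 <= k)%R ->
    measurable_fun setT f -> (forall w, 0 <= f w)%R ->
  'E_P[fun w => (k * f w)%R] = k%:E * 'E_P[f].
Proof.
move=> k0 mf f0; rewrite unlock -ge0_integralZl_EFin //.
- by move=> w _; rewrite lee_fin.
- exact/measurable_EFinP.
Qed.

Lemma ae_ge0_expectation_funrpos f : measurable_fun setT f ->
  {ae P, forall w, 0 <= f w}%R -> 'E_P[f] = 'E_P[f^\+].
Proof.
move=> mf f0; rewrite unlock; apply: ae_eq_integral => //.
- exact/measurable_EFinP.
- exact/measurable_EFinP/measurable_funrpos.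
- by apply: filterS f0 => w fw0 _; congr EFin; apply/esym/max_idPl.
Qed.

Lemma expectation_minr_gt0 k f : (0 < k)%R ->
    measurable_fun setT f -> (forall w, 0 <= f w)%R ->
  0 < 'E_P[f] -> 0 < 'E_P[fun w => Num.min k (f w)].
Proof.
move=> k0 mf f0 Ef0.
have mh : measurable_fun setT (fun w => Num.min k (f w)).
  exact: measurable_minr (measurable_cst _) mf.
rewrite lt0e expectation_ge0 ?andbT => [|w]; last by rewrite le_min (ltW k0) f0.
apply/negP => /eqP Eh0.
have h0 : {ae P, forall w, setT w -> (Num.min k (f w))%:E = 0}.
  apply/(ae_eq_integral_abs P measurableT); first exact/measurable_EFinP.
  rewrite -[RHS]Eh0 unlock; apply: eq_integral => w _.
  by rewrite gee0_abs // lee_fin le_min (ltW k0) f0.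
suff : 'E_P[f] <= 'E_P[cst 0%R] by rewrite expectation_cst leNgt Ef0.
apply: expectation_le => //.
apply: filterS h0 => w /(_ I) [] /eqP; apply: contraTT; rewrite -ltNge => fw0.
by rewrite gt_eqF // lt_min k0.
Qed.

End nonnegative_expectation.

Section normF_bounds.
Context {d} {T : measurableType d} {R : realType} {P : probability T R}.
Context {n : nat} {X : 'I_n -> {RV P >-> R}} {x : 'rV[R]_n.+1}.
Hypothesis X_ge0 : forall i, {ae P, forall w, 0 <= X i w}.

Let a : R := `|x 0 ord0|.
Let c (i : 'I_n) : R := `|x 0 (lift ord0 i)|.
Let M w := \big[Num.max/a]_(i < n) (c i * X i w).
(* X i may take negative values on a null set; its positive part has the same
   expectation and makes every integrand below nonnegative everywhere. *)
Let Y i w := c i * (X i)^\+ w.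
Let S w := a + \sum_(i < n) Y i w.

Let a_ge0 : 0 <= a. Proof. exact: normr_ge0. Qed.
Let c_ge0 i : 0 <= c i. Proof. exact: normr_ge0. Qed.
Let Y_ge0 i w : 0 <= Y i w. Proof. by rewrite mulr_ge0 ?funrpos_ge0. Qed.
Let S_ge0 w : 0 <= S w. Proof. by rewrite addr_ge0 ?sumr_ge0. Qed.
Let M_ge0 w : 0 <= M w.
Proof. exact: le_trans a_ge0 (bigmax_ge_id _ _ _ _). Qed.

Let mY i : measurable_fun setT (Y i).
Proof.
exact: measurable_funM (measurable_cst _)
  (measurable_funrpos (measurable_funPT _)).
Qed.

Let mM : measurable_fun setT M.
Proof.
apply: measurable_bigmax => i.
exact: measurable_funM (measurable_cst _) (measurable_funPT _).
Qed.

Let mS : measurable_fun setT S.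
Proof. exact: measurable_funD (measurable_cst _) (measurable_sum _ mY). Qed.

Let Y_le_M i w : Y i w <= M w.
Proof.
rewrite /Y /funrpos maxr_pMr // mulr0 ge_max M_ge0 andbT.
exact: le_bigmax (fun i => c i * X i w) i.
Qed.

Let M_le_bigmaxY w : M w <= \big[Num.max/a]_(i < n) Y i w.
Proof. by apply: le_bigmax2 => i _; rewrite ler_wpM2l // le_max lexx. Qed.

Let normFE : (normF X x = 'E_P[M])%E. Proof. by []. Qed.

Local Open Scope ereal_scope.

Let expectation_Y i : 'E_P[Y i] = (c i)%:E * 'E_P[X i].
Proof.
by rewrite ge0_expectationZl ?funrpos_ge0 // -ae_ge0_expectation_funrpos.
Qed.

Let expectation_S : 'E_P[S] = a%:E + \sum_(i < n) (c i)%:E * 'E_P[X i].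
Proof.
have -> : S = (cst a \+ fun w => \sum_(i < n) Y i w)%R by [].
rewrite ge0_expectationD //.
- rewrite expectation_cst ge0_expectation_sum //.
  by under eq_bigr do rewrite expectation_Y.
- exact: measurable_sum _ mY.
- by move=> w; rewrite sumr_ge0.
Qed.

Lemma normF_ge_head : a%:E <= normF X x.
Proof.
rewrite -(expectation_cst P a) normFE; apply: expectation_le => //.
by apply: aeW => w; exact: bigmax_ge_id.
Qed.

Lemma normF_ge_tail i : (c i)%:E * 'E_P[X i] <= normF X x.
Proof.
by rewrite -expectation_Y normFE; apply: expectation_le => //; apply: aeW.
Qed.

Lemma normF_le_sum : normF X x <= a%:E + \sum_(i < n) (c i)%:E * 'E_P[X i].
Proof.
rewrite -expectation_S normFE; apply: expectation_le => //; apply: aeW => w.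
exact: le_trans (M_le_bigmaxY w) (bigmax_le_add_sum a_ge0 (Y_ge0^~ w)).
Qed.

Lemma normF_lt_sum j : 0 < 'E_P[X j] -> (forall i, 'E_P[X i] < +oo) ->
    (0 < a)%R -> (0 < c j)%R ->
  normF X x < a%:E + \sum_(i < n) (c i)%:E * 'E_P[X i].
Proof.
move=> EXj_gt0 EX_fin a_gt0 cj_gt0.
pose h w := Num.min a (Y j w).
have mh : measurable_fun setT h by exact: measurable_minr.
have h_ge0 w : (0 <= h w)%R by rewrite le_min a_ge0 Y_ge0.
have Eh_gt0 : 0 < 'E_P[h].
  by apply: expectation_minr_gt0 => //; rewrite expectation_Y mule_gt0.
have Eh_add_EM : 'E_P[h] + 'E_P[M] <= 'E_P[S].
  rewrite -ge0_expectationD //; apply: expectation_le => //.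
  - exact: measurable_funD.
  - by move=> w; rewrite addr_ge0.
  apply: aeW => w /=.
  apply: le_trans _ (minr_add_bigmax_le_add_sum (Y_ge0^~ w) j).
  by rewrite lerD2l.
have ES_fin : 'E_P[S] \is a fin_num.
  rewrite expectation_S fin_numD /= sum_fin_num.
  apply/allP => z /mapP [i _ ->] /=.
  rewrite fin_numM // ge0_fin_numE ?EX_fin //.
  by rewrite ae_ge0_expectation_funrpos // expectation_ge0.
have EM_fin : 'E_P[M] \is a fin_num.
  rewrite ge0_fin_numE ?expectation_ge0 //.
  apply: le_lt_trans (le_trans (leeDr _ (ltW Eh_gt0)) Eh_add_EM) _.
  by case/fin_numPlt/andP: ES_fin.
by rewrite normFE -expectation_S (lt_le_trans _ Eh_add_EM) // lteDr.
Qed.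

End normF_bounds.

Theorem proposition2p17 (d : nat) (dT : measure_display) (T : measurableType dT)
  (R : realType) (P : probability T R) (X : 'I_d -> {RV P >-> R})
  (hX0 : forall i, {ae P, forall w, 0 <= X i w})
  (hXpos : forall i, (0 < 'E_P[X i])%E)
  (hXfin : forall i, ('E_P[X i] < +oo)%E)
  (x : 'rV[R]_d.+1) :
  ((forall i : 'I_d, `|x 0 (lift ord0 i)|%:E * 'E_P[X i] <= normF X x)%E
   /\ (`|x 0 ord0|%:E <= normF X x)%E)
  /\ (normF X x <= `|x 0 ord0|%:E
        + \sum_(i < d) `|x 0 (lift ord0 i)|%:E * 'E_P[X i])%E
  /\ (x 0 ord0 != 0 -> (exists i : 'I_d, x 0 (lift ord0 i) != 0) ->
      (normF X x < `|x 0 ord0|%:E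
        + \sum_(i < d) `|x 0 (lift ord0 i)|%:E * 'E_P[X i])%E).
Proof.
split; first by split; [exact: normF_ge_tail | exact: normF_ge_head].
split; first exact: normF_le_sum.
move=> x0_neq0 [j xj_neq0].
by apply: (normF_lt_sum hX0 j (hXpos j) hXfin); rewrite normr_gt0.
Qed.
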